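(* Let $(X,d)$ be a locally compact metric space and $f:X\to X$ a homeomorphism satisfying the topological shadowing property. Then for every $\epsilon\in\mathcal{C}^+$ there exists $\delta\in\mathcal{C}^+$ such that for every $\delta$-pseudo-orbit $\{x_n\}_{n\in\mathbb{Z}}$ there is $y\in X$ with $d(x_n,f^n(y))<\epsilon(f^n(y))$ for all $n\in\mathbb{Z}$.
   Context: $\mathcal{C}^+=\{\epsilon:X\to\mathbb{R}^+ : \epsilon \text{ continuous}\}$. For $\delta\in\mathcal{C}^+$, a sequence $\{x_n\}_{n\in\mathbb{Z}}\subset X$ is a $\delta$-pseudo-orbit of $f$ if $d(f(x_n),x_{n+1})<\delta(f(x_n))$ for every $n\in\mathbb{Z}$. For $\epsilon\in\mathcal{C}^+$, the sequence $\{x_n\}$ is $\epsilon$-shadowed by an orbit if there is $y\in X$ with $d(f^n(y),x_n)<\epsilon(x_n)$ for every $n\in\mathbb{Z}$. The homeomorphism $f$ satisfies the topological shadowing property if for every $\epsilon\in\mathcal{C}^+$ there exists $\delta\in\mathcal{C}^+$ such that every $\delta$-pseudo-orbit is $\epsilon$-shadowed by an orbit. *)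

From Stdlib Require Import Reals ZArith List.
Open Scope R_scope.

Record MetricSpace := {
  carrier :> Type;
  mdist : carrier -> carrier -> R;
  dist_nonneg : forall x y, 0 <= mdist x y;
  dist_eq0 : forall x y, mdist x y = 0 <-> x = y;
  dist_sym : forall x y, mdist x y = mdist y x;
  dist_tri : forall x y z, mdist x z <= mdist x y + mdist y z
}.

Section Metric.
Variable X : MetricSpace.

Definition mopen (U : X -> Prop) : Prop :=
  forall x, U x -> exists r, 0 < r /\ forall y, mdist X x y < r -> U y.

Definition mcompact (K : X -> Prop) : Prop :=
  forall (I : Type) (U : I -> X -> Prop),
    (forall i, mopen (U i)) ->
    (forall x, K x -> exists i, U i x) ->
    exists l : list I, forall x, K x -> exists i, In i l /\ U i x.

Definition locally_compact : Prop :=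
  forall x : X, exists r, 0 < r /\ mcompact (fun y => mdist X x y <= r).

Definition mcontinuous (Y : MetricSpace) (h : X -> Y) : Prop :=
  forall x eps, 0 < eps -> exists del, 0 < del /\
    forall y, mdist X x y < del -> mdist Y (h x) (h y) < eps.

Definition Cplus (e : X -> R) : Prop :=
  (forall x, 0 < e x) /\
  forall x eps, 0 < eps -> exists del, 0 < del /\
    forall y, mdist X x y < del -> Rabs (e x - e y) < eps.

Definition homeomorphism (f g : X -> X) : Prop :=
  mcontinuous X f /\ mcontinuous X g /\
  (forall x, g (f x) = x) /\ (forall x, f (g x) = x).

Definition iterz (f g : X -> X) (n : Z) (x : X) : X :=
  match n with
  | Z0 => x
  | Zpos p => Nat.iter (Pos.to_nat p) f x
  | Zneg p => Nat.iter (Pos.to_nat p) g x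
  end.

Definition pseudo_orbit (f : X -> X) (delta : X -> R) (xs : Z -> X) : Prop :=
  forall n : Z, mdist X (f (xs n)) (xs (n + 1)%Z) < delta (f (xs n)).

Definition shadowed (f g : X -> X) (eps : X -> R) (xs : Z -> X) : Prop :=
  exists y : X, forall n : Z, mdist X (iterz f g n y) (xs n) < eps (xs n).

Definition topological_shadowing (f g : X -> X) : Prop :=
  forall eps, Cplus eps -> exists delta, Cplus delta /\
    forall xs, pseudo_orbit f delta xs -> shadowed f g eps xs.

End Metric.

(* Shadowing for the 1-Lipschitz minorant h(x) = 1/2 inf_z (eps z + d(x,z)) of eps
   gives the claim: h is continuous and positive, and h(x) <= (eps y + d(x,y))/2,
   so d(x,y) < h(x) forces d(x,y) < eps y. *)
From Pilot Require Import Defs.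
From Stdlib Require Import Reals ZArith Lra.
Open Scope R_scope.

Section Envelope.
Variable X : MetricSpace.
Variable eps : X -> R.
Hypothesis eps_pos : forall x, 0 < eps x.

(* The infimum is taken as minus the supremum of the negated values. *)
Definition neg_envelope_set (x : X) (v : R) : Prop :=
  exists z, v = - (eps z + mdist X x z).

Lemma neg_envelope_set_bound x : bound (neg_envelope_set x).
Proof.
  exists 0; intros v [z ->].
  pose proof (eps_pos z); pose proof (dist_nonneg X x z); lra.
Qed.

Lemma neg_envelope_set_inhabited x : exists v, neg_envelope_set x v.
Proof. exists (- (eps x + mdist X x x)); exists x; reflexivity. Qed.

Definition envelope (x : X) : R :=
  - proj1_sig (completeness (neg_envelope_set x)
                 (neg_envelope_set_bound x) (neg_envelope_set_inhabited x)).

Lemma envelope_le x z : envelope x <= eps z + mdist X x z.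
Proof.
  unfold envelope; destruct completeness as [m Hm]; simpl; destruct Hm as [Hub _].
  enough (- (eps z + mdist X x z) <= m) by lra.
  apply Hub; exists z; reflexivity.
Qed.

Lemma envelope_ge x m :
  (forall z, m <= eps z + mdist X x z) -> m <= envelope x.
Proof.
  intros Hm; unfold envelope; destruct completeness as [s Hs]; simpl; destruct Hs as [_ Hlub].
  enough (s <= - m) by lra.
  apply Hlub; intros v [z ->]; specialize (Hm z); lra.
Qed.

Lemma envelope_lipschitz x y : envelope x <= envelope y + mdist X x y.
Proof.
  enough (envelope x - mdist X x y <= envelope y) by lra.
  apply envelope_ge; intros z.
  pose proof (envelope_le x z); pose proof (Defs.dist_tri X x y z); lra.
Qed.

Lemma envelope_pos : Cplus X eps -> forall x, 0 < envelope x.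
Proof.
  intros [_ eps_cont] x.
  destruct (eps_cont x (eps x / 2)) as [rho [rho_pos Hrho]].
  { pose proof (eps_pos x); lra. }
  set (c := Rmin (eps x / 2) rho).
  assert (c_pos : 0 < c).
  { apply Rmin_glb_lt; [pose proof (eps_pos x) |]; lra. }
  enough (c <= envelope x) by lra.
  apply envelope_ge; intros z.
  pose proof (eps_pos z); pose proof (dist_nonneg X x z).
  assert (c <= eps x / 2) by apply Rmin_l; assert (c <= rho) by apply Rmin_r.
  destruct (Rlt_or_le (mdist X x z) rho) as [Hnear | Hfar].
  - destruct (Rabs_def2 _ _ (Hrho z Hnear)); lra.
  - lra.
Qed.

Definition half_envelope (x : X) : R := envelope x / 2.

Lemma half_envelope_Cplus : Cplus X eps -> Cplus X half_envelope.
Proof.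
  intros He; split.
  - intros x; pose proof (envelope_pos He x); unfold half_envelope; lra.
  - intros x e e_pos; exists e; split; [exact e_pos |]; intros y Hxy.
    pose proof (envelope_lipschitz x y); pose proof (envelope_lipschitz y x).
    rewrite (Defs.dist_sym X y x) in *; unfold half_envelope.
    apply Rabs_def1; lra.
Qed.

Lemma lt_half_envelope_swap x y :
  mdist X y x < half_envelope x -> mdist X x y < eps y.
Proof.
  intros Hyx; pose proof (envelope_le x y).
  rewrite Defs.dist_sym in Hyx; unfold half_envelope in Hyx; lra.
Qed.

End Envelope.

Theorem mainTheorem3 (X : MetricSpace) (f g : X -> X) :
  locally_compact X ->
  homeomorphism X f g ->
  topological_shadowing X f g ->
  forall eps : X -> R, Cplus X eps ->
    exists delta : X -> R, Cplus X delta /\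
      forall xs : Z -> X, pseudo_orbit X f delta xs ->
        exists y : X, forall n : Z,
          mdist X (xs n) (iterz X f g n y) < eps (iterz X f g n y).
Proof.
  intros _ _ shadowing eps He.
  set (h := half_envelope X eps (proj1 He)).
  destruct (shadowing h (half_envelope_Cplus X eps (proj1 He) He))
    as [delta [delta_Cplus delta_shadows]].
  exists delta; split; [exact delta_Cplus |].
  intros xs Hxs; destruct (delta_shadows xs Hxs) as [y Hy].
  exists y; intros n.
  exact (lt_half_envelope_swap X eps (proj1 He) _ _ (Hy n)).
Qed.
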